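(* For all $n\in\mathbb{N}$, $D_n\equiv 1\pmod 3$.
   Context: For $n\in\mathbb{N}$, the Domb numbers are $D_n=\sum_{k=0}^n\binom{n}{k}^2\binom{2k}{k}\binom{2(n-k)}{n-k}$. *)

From mathcomp Require Import all_boot.

Definition domb (n : nat) : nat :=
  \sum_(0 <= k < n.+1) 'C(n, k) ^ 2 * 'C(2 * k, k) * 'C(2 * (n - k), n - k).

(* Domb numbers have the Lucas property modulo every prime p.  By Lucas'
   theorem, the summand of D_(pm+r) of index pj+s is congruent to the product
   of the summands of D_m and D_r of indices j and s; for the central binomial
   'C(2(pj+s), pj+s) this needs a separate look at the carry case 2s >= p,
   where both sides vanish.  Hence D_(3m+r) = D_m D_r (mod 3), and as
   D_0, D_1, D_2 = 1, 4, 28 are all 1 mod 3, induction on the base-3 digits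
   of n gives D_n = 1 (mod 3). *)

From mathcomp Require Import all_boot all_algebra zify ring.
Import GRing.Theory.

Definition domb_term (n k : nat) : nat :=
  'C(n, k) ^ 2 * 'C(2 * k, k) * 'C(2 * (n - k), n - k).

Lemma domb_widen n K : n < K -> domb n = \sum_(0 <= k < K) domb_term n k.
Proof.
move=> n_lt_K; rewrite [RHS](big_cat_nat _ (n := n.+1)) //=.
rewrite [X in _ + X]big1_seq ?addn0 // => k; rewrite mem_index_iota.
by case/and3P=> _ n_lt_k _; rewrite /domb_term bin_small.
Qed.

Section LucasCongruence.

Local Open Scope ring_scope.

Lemma big_nat_mul_blocks (V : nmodType) (d M : nat) (F : nat -> V) :
  \sum_(0 <= k < (d * M)%N) F k = \sum_(0 <= j < M) \sum_(0 <= s < d) F (d * j + s)%N.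
Proof.
elim: M => [|M IHM]; first by rewrite muln0 !big_geq.
rewrite mulnSr big_nat_recr //= -IHM (big_cat_nat _ (leq_addr d _)) //=.
congr (_ + _); rewrite -{1}(add0n (d * M)%N) big_addn addKn.
by apply: eq_bigr => s _; rewrite addnC.
Qed.

Context {R : comNzRingType} {p : nat}.
Hypothesis pchar_p : p \in [pchar R].

Let p_prime : prime p := pcharf_prime pchar_p.

Lemma bin_pchar j : ('C(p, j)%:R : R) = (j == 0%N)%:R + (j == p)%:R.
Proof.
have p_gt0 := prime_gt0 p_prime.
have [->|j_gt0] := posnP j; first by rewrite bin0 eq_sym gtn_eqF ?addr0.
have [j_gtp|j_lep] := ltnP p j; first by rewrite bin_small // !gtn_eqF // addr0.
rewrite add0r; case: eqVneq => [->|j_neq_p]; first by rewrite binn.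
apply/eqP; rewrite -(dvdn_pcharf pchar_p) prime_dvd_bin // j_gt0.
by rewrite ltn_neqAle j_neq_p.
Qed.

(* Vandermonde's identity with the first summand equal to [p]: only [j = 0] and [j = p] survive. *)
Lemma binDl_pchar n i :
  ('C(p + n, i)%N%:R : R) = 'C(n, i)%:R + (p <= i)%N%:R * 'C(n, i - p)%N%:R.
Proof.
rewrite -binomial.Vandermonde natr_sum.
under eq_bigr => j _ do rewrite natrM bin_pchar mulrDl !mulr_natl !mulrb.
rewrite big_split /= -!big_mkcond /= !(big_ord1_eq _ (fun j => 'C(n, i - j)%:R)).
by rewrite subn0 ltnS mulr_natl mulrb.
Qed.

Lemma lucas_pchar a b r s : (r < p)%N -> (s < p)%N ->
  ('C(p * a + r, p * b + s)%N%:R : R) = 'C(a, b)%:R * 'C(r, s)%:R.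
Proof.
move=> r_lt_p s_lt_p; elim: a b => [|a IHa] b.
  case: b => [|b]; first by rewrite !muln0 !add0n bin0 mul1r.
  by rewrite muln0 add0n bin0n mul0r bin_small ?mulr0n //; lia.
rewrite mulnS -addnA binDl_pchar.
case: b => [|b].
  rewrite muln0 add0n leqNgt s_lt_p mul0r addr0.
  by rewrite -[in LHS](add0n s) -[in LHS](muln0 p) IHa !bin0.
rewrite mulnS -addnA leq_addr mul1r addKn addnA -mulnS IHa IHa binS natrD.
by rewrite mulrDl addrC.
Qed.

Lemma bin_center_pchar j s : (s < p)%N ->
  ('C(2 * (p * j + s), p * j + s)%N%:R : R) = 'C(2 * j, j)%N%:R * 'C(2 * s, s)%N%:R.
Proof.
move=> s_lt_p; have [two_s_lt_p|p_le_two_s] := ltnP (2 * s) p.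
  have -> : (2 * (p * j + s) = p * (2 * j) + 2 * s)%N by lia.
  by rewrite lucas_pchar.
(* With a carry, both sides contain a factor ['C(2 s - p, s) = 0]. *)
have carry_small : (2 * s - p < s)%N by lia.
have carry_lt_p : (2 * s - p < p)%N by lia.
have -> : (2 * (p * j + s) = p * (2 * j).+1 + (2 * s - p))%N by lia.
rewrite lucas_pchar // (bin_small carry_small) mulr0n mulr0.
have -> : (2 * s = p + (2 * s - p))%N by lia.
by rewrite binDl_pchar leqNgt s_lt_p (bin_small carry_small) mul0r addr0 mulr0n mulr0.
Qed.

Lemma domb_term_pchar m r j s : (r < p)%N -> (s < p)%N ->
  ((domb_term (p * m + r) (p * j + s))%:R : R) = (domb_term m j)%:R * (domb_term r s)%:R.
Proof.
move=> r_lt_p s_lt_p; rewrite /domb_term !natrM !lucas_pchar // bin_center_pchar //.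
set x := 'C(m, j)%:R; set y := 'C(r, s)%:R.
set cj := 'C(2 * j, j)%N%:R; set cs := 'C(2 * s, s)%N%:R.
rewrite [RHS](_ : _ = x * y * (x * y) * (cj * cs) *
  ('C(2 * (m - j), m - j)%N%:R * 'C(2 * (r - s), r - s)%N%:R)); last by ring.
have [/andP[j_le_m s_le_r]|] := boolP ((j <= m) && (s <= r))%N.
  have -> : (p * m + r - (p * j + s) = p * (m - j) + (r - s))%N.
    by have := leq_mul (leqnn p) j_le_m; rewrite mulnBr; lia.
  by rewrite bin_center_pchar //; lia.
rewrite negb_and -!ltnNge => /orP[] lt_bin.
  by rewrite /x (bin_small lt_bin) mulr0n !mul0r.
by rewrite /y (bin_small lt_bin) mulr0n !(mulr0, mul0r).
Qed.

Lemma domb_pchar m r : (r < p)%N ->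
  ((domb (p * m + r))%:R : R) = (domb m)%:R * (domb r)%:R.
Proof.
move=> r_lt_p.
rewrite (domb_widen _ (p * m.+1)%N); last by rewrite mulnSr ltn_add2l.
rewrite (domb_widen _ _ (ltnSn m)) (domb_widen _ _ r_lt_p) !natr_sum big_nat_mul_blocks.
rewrite mulr_suml; apply: eq_big_nat => j _; rewrite mulr_sumr.
by apply: eq_big_nat => s /andP[_ s_lt_p]; apply: domb_term_pchar.
Qed.

End LucasCongruence.

Theorem lemma3p3 (n : nat) : domb n = 1 %[mod 3].
Proof.
have pchar3 : 3 \in [pchar 'F_3]%R := pchar_Fp (isT : prime 3).
suff domb_eq1 : ((domb n)%:R = 1 :> 'F_3)%R.
  by rewrite -(val_Fp_nat (isT : prime 3)) domb_eq1.
elim/ltn_ind: n => -[|n] IH; first by rewrite /domb unlock; apply/eqP.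
rewrite (divn_eq n.+1 3) mulnC (domb_pchar pchar3) ?ltn_mod // IH ?ltn_Pdiv // mul1r.
by case: (n.+1 %% 3) (ltn_mod n.+1 3) => [|[|[|]]] // _; rewrite /domb unlock; apply/eqP.
Qed.
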